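(* Let $(X,\mu)$ and $(Y,\nu)$ be $\sigma$-finite measure spaces and let $\tau:Y\to X$ be a measurable map which is nonsingular, i.e. $\nu(\tau^{-1}(E))=0$ for every $\mu$-null set $E\subset X$. Let $0<p<\infty$ and let $\Phi:[0,\infty)\to[0,\infty)$ be a Young function. Then the composition operator $C_\tau f=f\circ\tau$ is bounded from $L^{p,1}(X,\mu)$ to $L^\Phi(Y,\nu)$ (i.e. there is $C>0$ with $\|C_\tau f\|_{L^\Phi(Y)}\le C\|f\|_{L^{p,1}(X)}$ for all $f\in L^{p,1}(X,\mu)$) if and only if there exists a constant $D\ge1$ such that for all $\mu$-measurable sets $E\subset X$, \[ \nu(\tau^{-1}(E))\le\left\{\Phi\left(\frac{1}{D\mu(E)^{1/p}}\right)\right\}^{-1}. \]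
   Context: A Young function is a map $\Phi:[0,\infty)\to[0,\infty)$ that is positive on $(0,\infty)$, convex, and satisfies $\lim_{t\downarrow0}\Phi(t)=\Phi(0)=0$. For a measurable $f$ on $X$, the composition operator is $C_\tau f(y)=f(\tau(y))$, $y\in Y$. The Orlicz space $L^\Phi(Y,\nu)$ consists of measurable $g$ on $Y$ with $\int_Y\Phi(\epsilon|g|)\,d\nu<\infty$ for every $\epsilon>0$, with (quasi-)norm $\|g\|_{L^\Phi(Y)}=\inf\{\lambda>0:\int_Y\Phi(|g(y)|/\lambda)\,d\nu(y)\le1\}$. The Lorentz space $L^{p,1}(X,\mu)$ consists of measurable $f$ on $X$ with $\|f\|_{L^{p,1}(X)}=\int_0^\infty \mu(\{x\in X:|f(x)|>t\})^{1/p}\,dt<\infty$. In the volume condition the usual conventions $1/0=\infty$, $\Phi(\infty)=\infty$, $1/\infty=0$ are used when $\mu(E)\in\{0,\infty\}$. *)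

From HB Require Import structures.
From mathcomp Require Import all_boot all_order all_algebra.
From mathcomp Require Import all_classical all_reals all_analysis.
Set Implicit Arguments. Unset Strict Implicit. Unset Printing Implicit Defensive.
Import Order.TTheory GRing.Theory Num.Theory.
Import numFieldNormedType.Exports.
Local Open Scope classical_set_scope.
Local Open Scope ring_scope.

(* Young function: Phi : [0,oo) -> [0,oo) (values on negative reals are
   irrelevant), Phi 0 = 0, positive on (0,oo), convex on [0,oo),
   and Phi t -> 0 as t -> 0+. *)
Definition young_function (R : realType) (Phi : R -> R) : Prop :=
  [/\ Phi 0 = 0,
      (forall t, 0 < t -> 0 < Phi t),
      (forall x y a, 0 <= x -> 0 <= y -> 0 <= a <= 1 ->
          Phi (a * x + (1 - a) * y) <= a * Phi x + (1 - a) * Phi y) &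
      Phi t @[t --> 0^'+] --> 0].

Definition lorentz_p1_norm (R : realType) d (X : measurableType d)
    (mu : {measure set X -> \bar R}) (p : R) (f : X -> R) : \bar R :=
  (\int[@lebesgue_measure R]_(t in `[0%R, +oo[%classic)
      poweR (mu [set x | (t < `|f x|)%R]) p^-1)%E.

(* Orlicz (Luxemburg) quasi-norm
   ||g||_{L^Phi(Y)} = inf {lambda > 0 : int_Y Phi(|g|/lambda) dnu <= 1}
   (inf of the empty set is +oo). *)
Definition orlicz_norm (R : realType) d (Y : measurableType d)
    (nu : {measure set Y -> \bar R}) (Phi : R -> R) (g : Y -> R) : \bar R :=
  ereal_inf [set (l%:E)%E | l in
     [set l : R | 0 < l /\
        (\int[nu]_(y in setT) (Phi (`|g y| / l))%:E <= 1)%E]].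

(* The right-hand side {Phi(1/(D mu(E)^{1/p}))}^{-1} of the volume
   condition, with the conventions 1/0 = oo, Phi(oo) = oo, 1/oo = 0:
   it equals 0 if mu(E) = 0 and +oo if mu(E) = +oo. *)
Definition vol_bound (R : realType) (Phi : R -> R) (D p : R) (m : \bar R)
    : \bar R :=
  match m with
  | r%:E => if r == 0 then 0%E
            else ((Phi (1 / (D * powR r p^-1)))^-1)%:E
  | +oo%E => +oo%E
  | -oo%E => 0%E
  end.

From HB Require Import structures.
From mathcomp Require Import all_boot all_order all_algebra.
From mathcomp Require Import all_classical all_reals all_analysis.
From mathcomp Require Import ring measurable_realfun.
Set Implicit Arguments. Unset Strict Implicit. Unset Printing Implicit Defensive.
Import Order.TTheory GRing.Theory Num.Theory.
Import numFieldNormedType.Exports.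
Local Open Scope classical_set_scope.
Local Open Scope ring_scope.

(* Testing the bound on indicators f = 1_E, whose Lorentz norm is mu(E)^(1/p)
   and whose composition 1_E o tau = 1_(tau^-1 E) has Orlicz norm below b only
   if Phi(1/b) nu(tau^-1 E) <= 1, gives the volume condition with D = C + 1.
   Conversely, cut f at the dyadic levels 2^j, j in Z, and set
   c_j = mu(|f| > 2^j)^(1/p). Since mu(|f| > t) is nonincreasing, the Lorentz
   norm N dominates sum_j c_j 2^(j-1), while the Orlicz modular at scale l is
   at most sum_j Phi(2^(j+1)/l) nu(tau^-1 {|f| > 2^j}). By convexity,
   Phi(a x) <= a Phi(x) for a in [0,1], so the volume condition bounds the j-th
   term by 4 D c_j 2^(j-1) / l, and the modular is at most 1 once l > 4 D N. *)

Section young_function.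
Variables (R : realType) (Phi : R -> R).
Hypothesis yPhi : young_function Phi.

Lemma young0 : Phi 0 = 0. Proof. by case: yPhi. Qed.

Lemma young_gt0 (t : R) : 0 < t -> 0 < Phi t. Proof. by case: yPhi => _ + _ _; apply. Qed.

Lemma young_ge0 (t : R) : 0 <= t -> 0 <= Phi t.
Proof. by rewrite le_eqVlt => /predU1P[<-|/young_gt0/ltW//]; rewrite young0. Qed.

Lemma young_scale (a x : R) : 0 <= a <= 1 -> 0 <= x -> Phi (a * x) <= a * Phi x.
Proof.
case: yPhi => _ _ convex _ a01 x0.
by have := convex x 0 a x0 (lexx _) a01; rewrite !mulr0 !addr0 young0 mulr0 addr0.
Qed.

Lemma young_le (x y : R) : 0 <= x -> x <= y -> Phi x <= Phi y.
Proof.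
move=> x0 xy; have [y0|y0] := eqVneq y 0.
  by rewrite y0 in xy *; have -> : x = 0 by apply: le_anti; rewrite xy x0.
have y_gt0 : 0 < y by rewrite lt_def y0 (le_trans x0 xy).
have -> : x = x / y * y by rewrite divfK.
apply: le_trans (young_scale _ (ltW y_gt0)) _.
  by rewrite divr_ge0 ?(ltW y_gt0) //= ler_pdivrMr // mul1r.
by rewrite ler_piMl ?young_ge0 ?(ltW y_gt0) // ler_pdivrMr // mul1r.
Qed.

End young_function.

Section zseries.
Local Open Scope ereal_scope.
Variable R : realType.
Implicit Types u v : int -> \bar R.

(* [Negz n] is [-(n + 1)], so every integer is summed exactly once. *)
Definition zseries u : \bar R := \sum_(n <oo) (u (Posz n) + u (Negz n)).

Lemma zseries_ge u k : (forall j, 0 <= u j) -> u k <= zseries u.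
Proof.
move=> u0; have u0' n : 0 <= u (Posz n) + u (Negz n) by rewrite adde_ge0.
have le_pair n : u (Posz n) + u (Negz n) <= zseries u.
  apply: le_trans (nneseries_lim_ge n.+1 (fun m _ _ => u0' m)).
  by rewrite big_nat_recr //= leeDr // sume_ge0.
by case: k => n; apply: le_trans (le_pair n); [exact: leeDl|exact: leeDr].
Qed.

Lemma zseries_ge0 u : (forall j, 0 <= u j) -> 0 <= zseries u.
Proof. by move=> u0; apply: le_trans (zseries_ge 0 u0). Qed.

Lemma le_zseries u v : (forall j, 0 <= u j) -> (forall j, u j <= v j) ->
  zseries u <= zseries v.
Proof.
by move=> u0 uv; apply: lee_nneseries => [n _ _|n _]; [exact: adde_ge0|exact: leeD].
Qed.

Lemma zseriesZl u (k : R) : (forall j, 0 <= u j) ->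
  zseries (fun j => k%:E * u j) = k%:E * zseries u.
Proof.
move=> u0; rewrite /zseries -nneseriesZl => [|n _]; last exact: adde_ge0.
by apply: eq_eseriesr => n _; rewrite ge0_muleDr.
Qed.

Lemma zseries_single u k : (forall j, 0 <= u j) -> (forall j, j != k -> u j = 0) ->
  zseries u = u k.
Proof.
move=> u0 uk; have u0' n : 0 <= u (Posz n) + u (Negz n) by rewrite adde_ge0.
have other_pairs n : (forall i, i != n -> u (Posz i) = 0 /\ u (Negz i) = 0) ->
    \sum_(i <oo | i != n) (u (Posz i) + u (Negz i)) = 0.
  by move=> ui; apply: eseries0 => i _ /ui[-> ->]; rewrite adde0.
rewrite /zseries; case: k uk => n uk; rewrite (nneseriesD1 (n := n)) // other_pairs ?adde0.
- by rewrite (uk (Negz n)) ?adde0.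
- by move=> i ni; rewrite !uk //; apply: contra ni => /eqP[->].
- by rewrite (uk (Posz n)) ?add0e.
- by move=> i ni; rewrite !uk //; apply: contra ni => /eqP[->].
Qed.

End zseries.

Section integral_zseries.
Local Open Scope ereal_scope.
Context d (T : measurableType d) (R : realType) (mu : {measure set T -> \bar R}).

Lemma integral_zseries (D : set T) (F : int -> T -> \bar R) : measurable D ->
  (forall j, measurable_fun D (F j)) -> (forall j x, D x -> 0 <= F j x) ->
  \int[mu]_(x in D) zseries (F ^~ x) = zseries (fun j => \int[mu]_(x in D) F j x).
Proof.
move=> mD mF F0; rewrite /zseries integral_nneseries //.
- by apply: eq_eseriesr => n _; rewrite ge0_integralD // => x Dx; exact: F0.
- by move=> n; exact: emeasurable_funD.
- by move=> n x Dx; rewrite adde_ge0 ?F0.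
Qed.

End integral_zseries.

Section dyadic.
Variable R : realType.

Definition dyadic (j : int) : R := 2 `^ j%:~R.

Definition dyadic_index (t : R) : int := Num.ceil (ln t / ln 2).

Lemma dyadic_gt0 j : 0 < dyadic j.
Proof. exact: powR_gt0. Qed.

Lemma dyadicB1 j : dyadic (j - 1) = dyadic j / 2.
Proof.
by rewrite /dyadic intrB powRD ?pnatr_eq0 ?implybT // powRN powRr1.
Qed.

Lemma dyadic_indexP t j : 0 < t ->
  (dyadic_index t == j) = (dyadic j / 2 < t <= dyadic j).
Proof.
move=> t_gt0; have ln2_gt0 : 0 < ln (2 : R) by rewrite ln_gt0 // ltr1n.
rewrite /dyadic_index ceil_eq -dyadicB1 ltr_pdivlMr // ler_pdivrMr //.
by rewrite -!ln_powR ltr_ln ?ler_ln // posrE powR_gt0.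
Qed.

End dyadic.

Arguments dyadic {R}.

Section ge0_integral.
Local Open Scope ereal_scope.
Context d (T : measurableType d) (R : realType) (mu : {measure set T -> \bar R}).

(* Unlike [ge0_le_integral], no measurability is needed: the Lorentz integrand
   [t |-> mu (|f| > t) ^ (1/p)] is not known to be measurable. *)
Lemma le_ge0_integral (D : set T) (f g : T -> \bar R) :
  (forall x, D x -> 0 <= f x) -> (forall x, D x -> f x <= g x) ->
  \int[mu]_(x in D) f x <= \int[mu]_(x in D) g x.
Proof.
move=> f0 fg; have g0 x : D x -> 0 <= g x by move=> Dx; exact: le_trans (f0 _ Dx) (fg _ Dx).
rewrite (ge0_integralE _ f0) (ge0_integralE _ g0).
apply: ge_ereal_sup => _ [h /= hf <-]; apply: ereal_sup_ubound; exists h => //= x.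
apply: le_trans (hf x) _; rewrite /patch; case: ifP => // /set_mem; exact: fg.
Qed.

Lemma measurable_norm_gt (f : T -> R) (t : R) : measurable_fun setT f ->
  measurable [set x | (t < `|f x|)%R].
Proof.
move=> mf; have := measurableT_comp (@normr_measurable R setT) mf measurableT
  (measurable_itv `]t, +oo[).
by rewrite setTI; congr measurable; apply/seteqP; split => x /=; rewrite in_itv /= andbT.
Qed.

End ge0_integral.

Section lorentz.
Local Open Scope ereal_scope.
Context d (X : measurableType d) (R : realType) (mu : {measure set X -> \bar R}).
Variable p : R.
Hypothesis p_gt0 : (0 < p)%R.

Lemma lorentz_p1_norm_indic (E : set X) : measurable E ->
  lorentz_p1_norm mu p \1_E = poweR (mu E) p^-1.
Proof.
move=> mE; have pV_neq0 : (p^-1 != 0)%R by rewrite invr_eq0 gt_eqF.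
have level_set (t : R) : (0 <= t)%R ->
    poweR (mu [set x | (t < `|(\1_E x : R)|)%R]) p^-1 =
    poweR (mu E) p^-1 * (\1_(`[0%R, 1%R[%classic) t)%:E.
  move=> t0; rewrite indicE mem_setE in_itv /= t0 /=; have [t1|t1] := ltP t 1%R.
    rewrite mule1; congr (poweR (mu _) _); apply/seteqP; split => x /=.
      by rewrite indicE; case: (boolP (x \in E)) => [/set_mem|_]; rewrite ?normr0 // ltNge t0.
    by move=> Ex; rewrite indicE mem_set ?normr1.
  rewrite mule0 (_ : [set _ | _] = set0) ?measure0 /= ?powR0 //.
  apply/seteqP; split => x //=; rewrite indicE.
  by case: (x \in E); rewrite ?normr1 ?normr0 => /(le_lt_trans t1); rewrite ?ltxx ?ltr10.
rewrite /lorentz_p1_norm.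
under eq_integral => t /[!inE] /= /[!in_itv] /= /andP[t0 _] do rewrite level_set //.
rewrite ge0_integralZl //; last exact: poweR_ge0.
- rewrite integral_indic // setIidl; last by move=> t /=; rewrite !in_itv /= => /andP[->].
  rewrite -[RHS]mule1; congr (_ * _).
  by apply: eq_trans (lebesgue_measure_itv `[0%R, 1%R[) _; rewrite /= lte_fin ltr01 sube0.
- by apply/measurable_EFinP; exact: measurable_indic.
Qed.

Lemma lorentz_dyadic_le (f : X -> R) : measurable_fun setT f ->
  zseries (fun j => poweR (mu [set x | (dyadic j < `|f x|)%R]) p^-1 * (dyadic j / 2)%:E)
  <= lorentz_p1_norm mu p f.
Proof.
move=> mf; pose level (t : R) := poweR (mu [set x | (t < `|f x|)%R]) p^-1.
pose I (j : int) : set R := `](dyadic j / 2)%R, dyadic j]%classic.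
have level_anti (s t : R) : (s <= t)%R -> level t <= level s.
  move=> st; apply: gt0_ler_poweR; rewrite ?in_itv /= ?measure_ge0 ?leey ?invr_ge0 ?(ltW p_gt0) //.
  apply: le_measure; rewrite ?inE; try exact: measurable_norm_gt.
  by move=> x /=; apply: le_lt_trans.
have half_gt0 j : (0 < dyadic j / 2 :> R)%R by rewrite divr_gt0 ?dyadic_gt0.
have I_ge0 j : I j `<=` `[0%R, +oo[.
  by move=> t; rewrite /I /= !in_itv /= andbT => /andP[/ltW/(le_trans (ltW (half_gt0 j)))].
have term j : level (dyadic j) * (dyadic j / 2)%:E =
    \int[lebesgue_measure]_(t in `[0%R, +oo[) (level (dyadic j) * (\1_(I j) t)%:E).
  rewrite ge0_integralZl //; last exact: poweR_ge0.
  - rewrite integral_indic ?setIidl //; last exact: measurable_itv.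
    congr (_ * _); apply/esym; apply: eq_trans (lebesgue_measure_itv _) _.
    rewrite /= lte_fin ltr_pdivrMr // ltr_pMr ?dyadic_gt0 ?ltr1n // -EFinD.
    by congr EFin; field.
  - by apply/measurable_EFinP/measurable_indic; exact: measurable_itv.
rewrite (_ : zseries _ = zseries (fun j =>
    \int[lebesgue_measure]_(t in `[0%R, +oo[) (level (dyadic j) * (\1_(I j) t)%:E))); last first.
  by congr zseries; apply/funext => j; exact: term.
rewrite -integral_zseries //; first last.
- by move=> j t _; rewrite mule_ge0 ?poweR_ge0 ?lee_fin.
- move=> j; apply: measurable_funeM; apply/measurable_EFinP/measurable_indic.
  exact: measurable_itv.
apply: le_ge0_integral => [t _|t]; first by apply: zseries_ge0 => j; rewrite mule_ge0 ?poweR_ge0 ?lee_fin.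
rewrite /= in_itv /= andbT => t0.
have memI j : (t \in I j) = (dyadic j / 2 < t <= dyadic j)%R by rewrite mem_setE in_itv.
have term_le j : level (dyadic j) * (\1_(I j) t)%:E <= level t.
  rewrite indicE memI; case: andP => [[_ tj]|_].
    by rewrite mule1 level_anti.
  by rewrite mule0 poweR_ge0.
rewrite (zseries_single (k := dyadic_index t)) ?term_le // => [j|j jk].
  by rewrite mule_ge0 ?poweR_ge0 ?lee_fin.
rewrite indicE memI; case: andP => [[tj1 tj2]|_]; last by rewrite mule0.
have t_gt0 : (0 < t)%R := lt_trans (half_gt0 j) tj1.
by move: jk; rewrite eq_sym dyadic_indexP // tj1 tj2.
Qed.

End lorentz.

Section orlicz.
Local Open Scope ereal_scope.
Context d (Y : measurableType d) (R : realType) (nu : {measure set Y -> \bar R}).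
Variable Phi : R -> R.

Lemma orlicz_norm_le (g : Y -> R) (L : R) : (0 <= L)%R ->
  (forall l, (L < l)%R -> \int[nu]_(y in setT) (Phi (`|g y| / l))%:E <= 1) ->
  orlicz_norm nu Phi g <= L%:E.
Proof.
move=> L0 modular; apply/lee_addgt0Pr => e e0; apply: ereal_inf_lbound.
exists (L + e)%R; last by rewrite EFinD.
by split; [rewrite (le_lt_trans L0) // ltrDl | apply: modular; rewrite ltrDl].
Qed.

Hypothesis yPhi : young_function Phi.

Lemma orlicz_modular_indic (A : set Y) (l : R) : measurable A -> (0 < l)%R ->
  \int[nu]_(y in setT) (Phi (`|(\1_A y : R)| / l))%:E = (Phi l^-1)%:E * nu A.
Proof.
move=> mA l_gt0.
have pointwise y : (Phi (`|(\1_A y : R)| / l))%:E = (Phi l^-1)%:E * (\1_A y)%:E.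
  by rewrite indicE; case: (y \in A); rewrite /= ?normr1 ?normr0 ?div1r ?mul0r ?mule1 ?mule0 ?young0.
rewrite (eq_integral (fun y => (Phi l^-1)%:E * (\1_A y)%:E)); last by move=> y _; exact: pointwise.
rewrite ge0_integralZl_EFin ?(young_ge0 yPhi) ?invr_ge0 ?(ltW l_gt0) //.
- by rewrite integral_indic ?setIT.
- by apply/measurable_EFinP; exact: measurable_indic.
Qed.

Lemma orlicz_norm_indic_lt (A : set Y) (b : R) : measurable A ->
  orlicz_norm nu Phi (\1_A : Y -> R) < b%:E -> (Phi b^-1)%:E * nu A <= 1.
Proof.
move=> mA /ereal_inf_lt[_ [l [l_gt0 modular] <-]]; rewrite lte_fin => lb.
rewrite orlicz_modular_indic // in modular; apply: le_trans modular.
have b_gt0 := lt_trans l_gt0 lb.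
rewrite lee_wpmul2r ?measure_ge0 // lee_fin.
by rewrite young_le ?invr_ge0 ?(ltW b_gt0) // lef_pV2 ?posrE // ltW.
Qed.

Lemma orlicz_modular_dyadic_le (g : Y -> R) (l : R) : measurable_fun setT g -> (0 < l)%R ->
  \int[nu]_(y in setT) (Phi (`|g y| / l))%:E <=
  zseries (fun j => (Phi (2 * dyadic j / l))%:E * nu [set y | (dyadic j < `|g y|)%R]).
Proof.
move=> mg l_gt0; pose A (j : int) := [set y | (dyadic j < `|g y|)%R].
have mA j : measurable (A j) by exact: measurable_norm_gt.
have coef_ge0 j : (0 <= Phi (2 * dyadic j / l))%R.
  by apply: (young_ge0 yPhi); rewrite ltW // divr_gt0 ?mulr_gt0 ?dyadic_gt0.
have term j : (Phi (2 * dyadic j / l))%:E * nu (A j) =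
    \int[nu]_(y in setT) ((Phi (2 * dyadic j / l))%:E * (\1_(A j) y)%:E).
  rewrite ge0_integralZl_EFin // ?integral_indic ?setIT //.
  by apply/measurable_EFinP; exact: measurable_indic.
rewrite (_ : zseries _ = zseries (fun j =>
    \int[nu]_(y in setT) ((Phi (2 * dyadic j / l))%:E * (\1_(A j) y)%:E))); last first.
  by congr zseries; apply/funext => j; exact: term.
rewrite -integral_zseries //; first last.
- by move=> j y _; rewrite mule_ge0 ?lee_fin.
- by move=> j; apply/measurable_funeM/measurable_EFinP; exact: measurable_indic.
apply: le_ge0_integral => y _.
  by rewrite lee_fin young_ge0 // divr_ge0 // ltW.
have [g0|g_neq0] := eqVneq (g y) 0%R.
  by rewrite g0 normr0 mul0r young0 // zseries_ge0 // => j; rewrite mule_ge0 ?lee_fin.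
have s_gt0 : (0 < `|g y|)%R by rewrite normr_gt0.
set k := (dyadic_index `|g y| - 1)%R.
have dk : dyadic k = (dyadic (k + 1) / 2 :> R)%R by rewrite -dyadicB1 addrK.
have d2k : (2 * dyadic k)%R = dyadic (k + 1) :> R by rewrite dk mulrC divfK ?pnatr_eq0.
have : dyadic_index `|g y| == (k + 1)%R by rewrite /k subrK.
rewrite dyadic_indexP // -dk -d2k => /andP[gk gk2].
apply: le_trans (zseries_ge k _); last by move=> j; rewrite mule_ge0 ?lee_fin.
rewrite indicE mem_set // mule1 lee_fin young_le // ?divr_ge0 ?(ltW l_gt0) //.
by rewrite ler_pM2r ?invr_gt0.
Qed.

End orlicz.

Section volume_bound.
Local Open Scope ereal_scope.
Variables (R : realType) (Phi : R -> R).
Hypothesis yPhi : young_function Phi.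

Lemma vol_bound_modular_le (D p x : R) (m v : \bar R) :
  (0 < D)%R -> (0 < p)%R -> (0 < x)%R -> 0 <= m -> 0 <= v ->
  v <= vol_bound Phi D p m -> (x * D)%:E * poweR m p^-1 <= 1 ->
  (Phi x)%:E * v <= (x * D)%:E * poweR m p^-1.
Proof.
move=> D_gt0 p_gt0 x_gt0; case: m => [r| |] //= r_ge0 v_ge0; last first.
  by move=> _; rewrite ifF ?invr_eq0 ?gt_eqF // gt0_muley // lte_fin mulr_gt0.
have {}r_ge0 : (0 <= r)%R by rewrite -lee_fin.
case: eqP => [-> vm _|/eqP r_neq0 vm].
  have -> : v = 0 by apply/le_anti; rewrite vm v_ge0.
  by rewrite mule0 mule_ge0 // lee_fin ?powR_ge0 // mulr_ge0 // ltW.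
have r_gt0 : (0 < r)%R by rewrite lt_def r_neq0.
set c := (r `^ p^-1)%R in vm *; have c_gt0 : (0 < c)%R by exact: powR_gt0.
set y := (1 / (D * c))%R in vm; have y_gt0 : (0 < y)%R by rewrite divr_gt0 // mulr_gt0.
have Phiy_gt0 := young_gt0 yPhi y_gt0.
case: v v_ge0 vm => [w| |] // w_ge0; rewrite -!EFinM -[1]/(1%:E) !lee_fin => vm a_le1.
have {}w_ge0 : (0 <= w)%R by rewrite -lee_fin.
set a := (x * D * c)%R in a_le1 *.
have -> : x = (a * y)%R by rewrite /a /y; field; rewrite !gt_eqF.
have a_ge0 : (0 <= a)%R by rewrite /a !mulr_ge0 // ltW.
apply: le_trans (ler_wpM2r w_ge0 (young_scale yPhi _ (ltW y_gt0))) _.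
  by rewrite a_ge0 a_le1.
by rewrite -mulrA ler_piMr // -(ler_pdivlMl _ _ Phiy_gt0) mulr1.
Qed.

End volume_bound.

Section composition_operator.
Local Open Scope ereal_scope.
Variables (R : realType) (d1 d2 : measure_display)
  (X : measurableType d1) (Y : measurableType d2)
  (mu : {measure set X -> \bar R}) (nu : {measure set Y -> \bar R})
  (tau : Y -> X) (p : R) (Phi : R -> R).
Hypothesis mtau : measurable_fun setT tau.
Hypothesis p_gt0 : (0 < p)%R.
Hypothesis yPhi : young_function Phi.

Lemma vol_bound_of_composition_le (C : R) : (0 < C)%R ->
  (forall E, measurable E -> mu E = 0 -> nu (tau @^-1` E) = 0) ->
  (forall f : X -> R, measurable_fun setT f -> lorentz_p1_norm mu p f < +oo ->
     orlicz_norm nu Phi (f \o tau) <= C%:E * lorentz_p1_norm mu p f) ->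
  forall E, measurable E -> nu (tau @^-1` E) <= vol_bound Phi (C + 1) p (mu E).
Proof.
move=> C_gt0 nonsingular bounded E mE.
have mtauE : measurable (tau @^-1` E) by rewrite -[_ @^-1` _]setTI; exact: mtau.
case muE: (mu E) => [r| |] /=; last 2 first.
- exact: leey.
- have : 0 <= mu E by exact: measure_ge0.
  by rewrite muE.
case: eqP => [r0|/eqP r_neq0]; first by rewrite nonsingular // muE r0.
have r_gt0 : (0 < r)%R by rewrite lt_def r_neq0 -lee_fin -muE measure_ge0.
set c := (r `^ p^-1)%R; have c_gt0 : (0 < c)%R by exact: powR_gt0.
have norm1E : lorentz_p1_norm mu p \1_E = c%:E by rewrite lorentz_p1_norm_indic // muE.
have : orlicz_norm nu Phi (\1_(tau @^-1` E) : Y -> R) < ((C + 1) * c)%:E.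
  have -> : \1_(tau @^-1` E) = \1_E \o tau :> (Y -> R) by [].
  apply: le_lt_trans (bounded _ (measurable_indic mE) _) _; rewrite norm1E ?ltry //.
  by rewrite -EFinM lte_fin ltr_pM2r // ltrDl.
move/(orlicz_norm_indic_lt yPhi mtauE) => modular_le1.
have Phi_gt0 : (0 < Phi ((C + 1) * c)^-1)%R by rewrite young_gt0 // invr_gt0 mulr_gt0 // addr_gt0.
by rewrite div1r -[X in _ <= X]mule1 lee_pdivlMl.
Qed.

Lemma orlicz_norm_composition_le (D : R) : (1 <= D)%R ->
  (forall E, measurable E -> nu (tau @^-1` E) <= vol_bound Phi D p (mu E)) ->
  forall f : X -> R, measurable_fun setT f -> lorentz_p1_norm mu p f < +oo ->
  orlicz_norm nu Phi (f \o tau) <= (4 * D)%:E * lorentz_p1_norm mu p f.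
Proof.
move=> D_ge1 volume f mf N_lty.
have D_gt0 : (0 < D)%R := lt_le_trans ltr01 D_ge1.
pose c j := poweR (mu [set x | (dyadic j < `|f x|)%R]) p^-1.
have dyadic_sum := lorentz_dyadic_le mu p_gt0 mf.
have N_ge0 : 0 <= lorentz_p1_norm mu p f.
  by apply: integral_ge0 => t _; exact: poweR_ge0.
have c_half_ge0 j : 0 <= c j * (dyadic j / 2)%:E.
  by rewrite mule_ge0 ?poweR_ge0 // lee_fin divr_ge0 // ltW // dyadic_gt0.
case: (lorentz_p1_norm mu p f) N_lty N_ge0 dyadic_sum => [N| |] // _ N_ge0 dyadic_sum.
have {}N_ge0 : (0 <= N)%R by rewrite -lee_fin.
rewrite -EFinM; apply: orlicz_norm_le; first by rewrite mulr_ge0 // mulr_ge0 // ltW.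
move=> l lN; have l_gt0 : (0 < l)%R by apply: le_lt_trans lN; rewrite !mulr_ge0 // ltW.
have scaled_N_le1 : (4 * D / l)%:E * N%:E <= 1.
  by rewrite -EFinM lee_fin mulrAC ler_pdivrMr // mul1r ltW.
have k_ge0 : 0 <= (4 * D / l)%:E by rewrite lee_fin divr_ge0 ?mulr_ge0 // ltW.
apply: le_trans (orlicz_modular_dyadic_le nu yPhi (measurableT_comp mf mtau) l_gt0) _.
have term_le j : (Phi (2 * dyadic j / l))%:E * nu (tau @^-1` [set x | (dyadic j < `|f x|)%R])
    <= (4 * D / l)%:E * (c j * (dyadic j / 2)%:E).
  have x_gt0 : (0 < 2 * dyadic j / l)%R by rewrite divr_gt0 ?mulr_gt0 ?dyadic_gt0.
  have scale : (4 * D / l)%:E * (c j * (dyadic j / 2)%:E) = (2 * dyadic j / l * D)%:E * c j.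
    by rewrite muleCA -EFinM muleC; congr (_%:E * _); field; rewrite gt_eqF.
  rewrite scale; apply: (vol_bound_modular_le yPhi D_gt0 p_gt0 x_gt0).
  - exact: measure_ge0.
  - exact: measure_ge0.
  - exact: volume (measurable_norm_gt _ mf).
  rewrite -scale; apply: le_trans _ scaled_N_le1; apply: (lee_wpmul2l k_ge0).
  exact: le_trans (zseries_ge j c_half_ge0) dyadic_sum.
apply: le_trans (le_zseries _ term_le) _.
  by move=> j; rewrite mule_ge0 ?measure_ge0 // lee_fin young_ge0 // divr_ge0 ?mulr_ge0 // ltW // dyadic_gt0.
rewrite zseriesZl //; apply: le_trans _ scaled_N_le1; exact: (lee_wpmul2l k_ge0).
Qed.

End composition_operator.

Unset Implicit Arguments.

Theorem theorem1p5 (R : realType) (d1 d2 : measure_display)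
    (X : measurableType d1) (Y : measurableType d2)
    (mu : {measure set X -> \bar R}) (nu : {measure set Y -> \bar R})
    (tau : Y -> X) (p : R) (Phi : R -> R) :
  sigma_finite setT mu -> sigma_finite setT nu ->
  measurable_fun setT tau ->
  (forall E : set X, measurable E -> mu E = 0%E -> nu (tau @^-1` E) = 0%E) ->
  0 < p ->
  young_function Phi ->
  (exists2 C : R, 0 < C &
     forall f : X -> R, measurable_fun setT f ->
       (lorentz_p1_norm mu p f < +oo)%E ->
       (orlicz_norm nu Phi (f \o tau) <= C%:E * lorentz_p1_norm mu p f)%E)
  <->
  (exists2 D : R, 1 <= D &
     forall E : set X, measurable E ->
       (nu (tau @^-1` E) <= vol_bound Phi D p (mu E))%E).
Proof.
move=> _ _ mtau nonsingular p_gt0 yPhi; split.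
- case=> C C_gt0 bounded; exists (C + 1); first by rewrite lerDr ltW.
  exact: vol_bound_of_composition_le.
- case=> D D_ge1 volume; exists (4 * D); first by rewrite mulr_gt0 // (lt_le_trans ltr01 D_ge1).
  exact: orlicz_norm_composition_le.
Qed.
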